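(* Let $G$ be a finite graph with $n$ vertices, each of degree at least $1$. Take $r=2$, $V=\mathbb{C}^2$, $B=I_2$, and the tensors $A_1^1=0$, $A_1^2=t$, and for $d\ge 2$: $A_d^{i_1\dots i_d}=x_1$ if $(i_1,\dots,i_d)$ is a permutation of $(1,1,2,\dots,2)$, $=t$ if $(i_1,\dots,i_d)=(2,\dots,2)$, and $0$ otherwise, with $x_1=1$ and $t=0$. Then $\mathcal{F}_{\mathcal{A},I_2}(G)$ equals the number of spanning cycles of $G$, i.e. of $2$-valent subgraphs of $G$ with $n$ edges.
   Context: $\mathcal{F}_{\mathcal{A},B}(G)=\sum_{c:H\to\{1,\dots,r\}}\prod_{\{h,h'\}\in E(G)}B_{c(h)c(h')}\prod_{k}A_{d_k}^{c(h_{k,1})\dots c(h_{k,d_k})}$, where $H$ is the set of half-edges of $G$ (two per edge, loops included) and $h_{k,1},\dots,h_{k,d_k}$ are the half-edges at vertex $v_k$ of degree $d_k$; i.e. a copy of $A_{d_k}$ is placed at each vertex and contracted along edges using $B$. A cycle of $G$ is a $2$-valent subgraph (every vertex in it has degree $2$ within it, loops counted twice), not necessarily connected; a spanning cycle is one with $n=|V(G)|$ edges. *)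

From mathcomp Require Import all_boot all_order all_algebra all_field.
Set Implicit Arguments. Unset Strict Implicit. Unset Printing Implicit Defensive.
Import GRing.Theory Num.Theory.
Local Open Scope ring_scope.

(* A finite (multi)graph with loops allowed: vertex set V, edge set E, and
   each edge e has two half-edges (e,false), (e,true); [ends h] is the vertex
   of half-edge h.  A loop is an edge whose two half-edges have the same end. *)

Definition halfedges_at (V E : finType) (ends : E * bool -> V) (v : V) :
  seq (E * bool) := enum [pred h : E * bool | ends h == v].

Definition degree (V E : finType) (ends : E * bool -> V) (v : V) : nat :=
  size (halfedges_at ends v).

(* A tensor family is given as a function A : seq 'I_2 -> algC, where
   A [:: i_1; ...; i_d] = A_d^{i_1...i_d}.  Colour 1 is ord0, colour 2 is ord1. *)
Definition partF (V E : finType) (ends : E * bool -> V)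
    (A : seq 'I_2 -> algC) (B : 'M[algC]_2) : algC :=
  \sum_(c : {ffun E * bool -> 'I_2})
     (\prod_(e : E) B (c (e, false)) (c (e, true))) *
     \prod_(v : V) A [seq c h | h <- halfedges_at ends v].

Definition col1 : 'I_2 := ord0.
Definition col2 : 'I_2 := ord_max.

Definition Atensor (x1 t : algC) (s : seq 'I_2) : algC :=
  let d := size s in
  if d == 1%N then (if s == [:: col2] then t else 0)
  else if perm_eq s (col1 :: col1 :: nseq (d - 2) col2) then x1
  else if s == nseq d col2 then t
  else 0.

(* Degree of v in the subgraph with edge set S (loops counted twice). *)
Definition sub_degree (V E : finType) (ends : E * bool -> V) (S : {set E})
    (v : V) : nat :=
  #|[set h : E * bool | (h.1 \in S) && (ends h == v)]|.

Definition is_cycle (V E : finType) (ends : E * bool -> V) (S : {set E}) : bool :=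
  [forall v : V, (sub_degree ends S v == 0%N) || (sub_degree ends S v == 2%N)].

Definition spanning_cycles (V E : finType) (ends : E * bool -> V) : {set {set E}} :=
  [set S : {set E} | is_cycle ends S && (#|S| == #|V|)].

(** With [B = I_2] only colourings giving both half-edges of each
    edge the same colour contribute, so a contributing colouring is the same as
    the set [S] of edges of colour 1.  With [x_1 = 1] and [t = 0] the vertex
    tensor at [v] is [1] exactly when two half-edges at [v] have colour 1 and
    [0] otherwise, so the sum counts the edge sets in which every vertex has
    degree 2.  By the handshake identity, these are precisely the 2-valent
    edge sets with [#|V|] edges. *)

From Pilot Require Import Defs.
From mathcomp Require Import all_boot all_order all_algebra all_field.
From mathcomp Require Import zify.
Set Implicit Arguments. Unset Strict Implicit. Unset Printing Implicit Defensive.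
Import GRing.Theory Num.Theory.
Local Open Scope ring_scope.

Lemma prodr_natb (R : pzSemiRingType) (I : finType) (b : I -> bool) :
  \prod_i ((b i)%:R : R) = [forall i, b i]%:R.
Proof.
rewrite -natr_prod; congr _%:R.
case: forallP => [allb | /forallP/forallPn[i /negbTE bi]].
  by apply: big1 => i _; rewrite allb.
by rewrite (bigD1 i) //= bi mul0n.
Qed.

Lemma eq_col2 (x : 'I_2) : (x == Defs.col2) = (x != Defs.col1).
Proof. by case: x => [[|[|m]] lt_m2]. Qed.

Lemma count_col2 (s : seq 'I_2) :
  count_mem Defs.col2 s = (size s - count_mem Defs.col1 s)%N.
Proof.
rewrite -(count_predC (pred1 Defs.col1)) addKn.
by apply: eq_count => x; rewrite /= eq_col2.
Qed.

Lemma perm_eq_I2 (s1 s2 : seq 'I_2) :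
  perm_eq s1 s2
  = (count_mem Defs.col1 s1 == count_mem Defs.col1 s2) && (size s1 == size s2).
Proof.
apply/idP/andP => [perm12 | [/eqP eq1 /eqP eq_size]].
  by rewrite (permP perm12) (perm_size perm12).
apply/allP => x _ /=; have [-> | ] := eqVneq x Defs.col1; first by rewrite eq1.
by rewrite -eq_col2 => /eqP ->; rewrite !count_col2 eq1 eq_size.
Qed.

Lemma Atensor_t0 (x1 : algC) (s : seq 'I_2) :
  Atensor x1 0 s = x1 *+ (count_mem Defs.col1 s == 2%N).
Proof.
rewrite /Atensor !if_same.
case: eqP => [size1 | /eqP size_ne1].
  by case: s size1 => [|x [|]] //= _; case: (x == Defs.col1).
rewrite perm_eq_I2 /= count_nseq /= mul0n addn0 size_nseq -[(1 + 1)%N]/2%N.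
have [cnt2 | //] := eqVneq (count_mem Defs.col1 s) 2%N.
have := count_size (pred1 Defs.col1) s; rewrite cnt2.
by case: (size s) => [|[|n]] // _; rewrite !subSS subn0 eqxx.
Qed.

Section EdgeColourings.
Variable E : finType.

Definition edge_colouring (S : {set E}) : {ffun E * bool -> 'I_2} :=
  [ffun h => if h.1 \in S then Defs.col1 else Defs.col2].

Definition edge_monochromatic (c : {ffun E * bool -> 'I_2}) : bool :=
  [forall e, c (e, false) == c (e, true)].

Definition col1_edges (c : {ffun E * bool -> 'I_2}) : {set E} :=
  [set e | c (e, false) == Defs.col1].

Lemma edge_colouringK : cancel edge_colouring col1_edges.
Proof. by move=> S; apply/setP => e; rewrite inE ffunE /=; case: (e \in S). Qed.

Lemma edge_monochromatic_colouring S : edge_monochromatic (edge_colouring S).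
Proof. by apply/forallP => e; rewrite !ffunE. Qed.

Lemma col1_edgesK c : edge_monochromatic c -> edge_colouring (col1_edges c) = c.
Proof.
move=> /forallP mono; apply/ffunP => -[e b]; rewrite ffunE inE /=.
have -> : c (e, b) = c (e, false) by case: b; rewrite // (eqP (mono e)).
by case: eqP => // /eqP; rewrite -eq_col2 => /eqP.
Qed.

End EdgeColourings.

Section Graph.
Variables (V E : finType) (ends : E * bool -> V).

Definition col1_twice_at_each_vertex (c : {ffun E * bool -> 'I_2}) : bool :=
  [forall v, count_mem Defs.col1 [seq c h | h <- halfedges_at ends v] == 2%N].

Lemma count_col1_edge_colouring S v :
  count_mem Defs.col1 [seq edge_colouring S h | h <- halfedges_at ends v]
  = sub_degree ends S v.
Proof.
rewrite count_map /halfedges_at /sub_degree cardE /enum_mem -size_filter.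
rewrite -filter_predI; congr size; apply: eq_filter => h.
by rewrite !inE ffunE /=; case: (h.1 \in S).
Qed.

Lemma handshake S : (\sum_v sub_degree ends S v = #|S| * 2)%N.
Proof.
rewrite /sub_degree; under eq_bigr => v _ do rewrite -sum1dep_card.
rewrite -(partition_big ends xpredT) // sum1dep_card.
have -> : [set h : E * bool | h.1 \in S] = setX S [set: bool].
  by apply/setP => -[e b]; rewrite !inE andbT.
by rewrite cardsX cardsT card_bool.
Qed.

Lemma spanning_cyclesE S :
  (S \in spanning_cycles ends) = [forall v, sub_degree ends S v == 2%N].
Proof.
have sum_deg := handshake S.
rewrite inE; apply/andP/forallP => [[/forallP deg02 /eqP cardS] v | deg2].
  have deg_le2 w : (sub_degree ends S w <= 2)%N.
    by case/orP: (deg02 w) => /eqP ->.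
  have := sumnB (index_enum V) (P := xpredT) (fun w _ => deg_le2 w).
  rewrite sum_deg -(big_mkcond (fun=> true)) sum_nat_const cardT -cardE cardS subnn.
  by move/eqP; rewrite sum_nat_eq0 => /forallP /(_ v) /=; have := deg_le2 v; lia.
split; first by apply/forallP => v; rewrite (eqP (deg2 v)) orbT.
move: sum_deg; under eq_bigr => v _ do rewrite (eqP (deg2 v)).
by rewrite sum_nat_const cardT -cardE => ?; apply/eqP; lia.
Qed.

Lemma partF_term_scalar1 (c : {ffun E * bool -> 'I_2}) :
  (\prod_e (1%:M : 'M[algC]_2) (c (e, false)) (c (e, true))) *
     \prod_v Atensor 1 0 [seq c h | h <- halfedges_at ends v]
  = (edge_monochromatic c && col1_twice_at_each_vertex c)%:R.
Proof.
under eq_bigr => e _ do rewrite mxE.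
under [X in _ * X]eq_bigr => v _ do rewrite Atensor_t0.
by rewrite !prodr_natb -natrM mulnb.
Qed.

Lemma contributing_colourings :
  [set c | edge_monochromatic c && col1_twice_at_each_vertex c]
  = @edge_colouring E @: spanning_cycles ends.
Proof.
apply/setP => c; rewrite inE; apply/andP/imsetP => [[mono /forallP deg2] | [S]].
  exists (col1_edges c); last by rewrite col1_edgesK.
  rewrite spanning_cyclesE; apply/forallP => v.
  by rewrite -count_col1_edge_colouring col1_edgesK // deg2.
rewrite spanning_cyclesE => /forallP deg2 ->.
split; first exact: edge_monochromatic_colouring.
by apply/forallP => v; rewrite count_col1_edge_colouring deg2.
Qed.

End Graph.

Theorem corollary2 (V E : finType) (ends : E * bool -> V)
    (hdeg : forall v : V, (0 < degree ends v)%N) :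
  partF ends (Atensor 1 0) 1%:M = (#|spanning_cycles ends|)%:R.
Proof.
rewrite /partF; under eq_bigr => c _ do rewrite partF_term_scalar1.
rewrite -natr_sum -(card_imset _ (can_inj (@edge_colouringK E))).
rewrite -contributing_colourings -sum1dep_card; congr _%:R.
by rewrite [RHS]big_mkcond; apply: eq_bigr => c _; case: (_ && _).
Qed.
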